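(* Let $\lambda\ge1$ and let $f_\lambda$ be the number of free subgroups of index $6\lambda$ in $PSL_2(\mathbb Z)$. Then: (1) $f_\lambda\equiv-1\pmod 3$ if and only if the ternary expansion of $\lambda$ lies in $\{0,2\}^*1$; (2) $f_\lambda\equiv1\pmod 3$ if and only if the ternary expansion of $\lambda$ lies in $\{0,2\}^*10 0^*\cup\{0,2\}^*12 2^*$; (3) for all other $\lambda\ge1$, $f_\lambda\equiv0\pmod3$.
   Context: Equivalently, $F(z)=1+\sum_{\lambda\ge1}f_\lambda z^\lambda$ is the unique formal power series with $F(0)=1$ satisfying $zF^2(z)-(1-4z)F(z)+6z^2F'(z)+1=0$. Word notation: ternary expansions are written as strings of digits $0,1,2$ with the most significant digit on the left, and leading $0$'s may be added or removed at will; for a set $S$ of letters, $S^*$ is the set of all finite words over $S$; $a^*=\{\text{empty word},a,aa,\dots\}$; juxtaposition of sets of words denotes the set of concatenations. Thus e.g. $\{0,2\}^*100^*$ is the set of strings consisting of an arbitrary word in $0,2$, followed by $1$, followed by one or more $0$'s. *)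

From mathcomp Require Import all_boot all_order all_algebra.
Set Implicit Arguments. Unset Strict Implicit. Unset Printing Implicit Defensive.
Import GRing.Theory Num.Theory.
Local Open Scope ring_scope.

(* f : nat -> int is the coefficient sequence of a formal power series
   F(z) = \sum_n f n z^n with F(0)=1 satisfying
     z F^2 - (1 - 4z) F + 6 z^2 F' + 1 = 0,
   written coefficientwise:
   [z^0]     : -f 0 + 1 = 0
   [z^(n+1)] : \sum_(i<n+1) f i f (n-i) - f (n+1) + 4 f n + 6 n f n = 0. *)
Definition free_subgroup_series (f : nat -> int) : Prop :=
  f 0%N = 1 /\
  - f 0%N + 1 = 0 /\
  (forall n : nat,
     (\sum_(i < n.+1) f i * f (n - i)%N) - f n.+1 + 4 * f n
       + 6 * (n%:R * f n) = 0).

Fixpoint ternary_aux (fuel n : nat) : seq nat :=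
  match fuel with
  | 0 => [::]
  | fuel'.+1 => if n == 0%N then [::]
                else rcons (ternary_aux fuel' (n %/ 3)%N) (n %% 3)%N
  end.
Definition ternary (n : nat) : seq nat := ternary_aux n n.

Definition digits02 (w : seq nat) : bool := all (fun d => d \in [:: 0%N; 2%N]) w.

Definition lang_minus1 (s : seq nat) : Prop :=
  exists w, digits02 w /\ s = w ++ [:: 1%N].

Definition lang_plus1 (s : seq nat) : Prop :=
  exists w k, digits02 w /\
    (s = w ++ 1%N :: 0%N :: nseq k 0%N \/ s = w ++ 1%N :: 2%N :: nseq k 2%N).

From mathcomp Require Import all_boot all_order all_algebra.
From mathcomp Require Import zify ring.
Import GRing.Theory Num.Theory.
Set Implicit Arguments. Unset Strict Implicit.

(* Modulo 3 (where 4 = 1 and 6 = 0) the equation of F becomes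
   z F^2 - (1 - z) F + 1 = 0; with Q := z F + 1 - z it reads Q^2 = 1 + z^2.
   As -1/2 = 1 + 3 + 9 + ... 3-adically, Frobenius gives the solution
   Q = (1 + z^2) * \prod_j (1 + z^(2 3^j)), and the product is the series of
   the indicator of "all ternary digits are 0 or 2" (the predicate only02).
   Hence f_l = [only02 (l+1)] + [only02 (l-1)] in 'F_3, and the corollary is a
   statement about the ternary digits of l - 1, l, l + 1. *)

Lemma ternary_aux_fuel (fuel fuel' n : nat) :
  (n <= fuel)%N -> (n <= fuel')%N -> ternary_aux fuel n = ternary_aux fuel' n.
Proof.
elim: fuel fuel' n => [|fuel IH] [|fuel'] n //=.
- by rewrite leqn0 => /eqP ->.
- by rewrite leqn0 => _ /eqP ->.
move=> le_n le_n'; case: eqP => // _.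
by rewrite (IH fuel') //; lia.
Qed.

Lemma ternaryE (n : nat) :
  (0 < n)%N -> ternary n = rcons (ternary (n %/ 3)) (n %% 3).
Proof.
case: n => [|n] // _; rewrite /ternary /=.
by rewrite (@ternary_aux_fuel n (n.+1 %/ 3) (n.+1 %/ 3)) //; lia.
Qed.

(* m has only the digits 0 and 2 in base 3 (true for m = 0). *)
Definition only02 (m : nat) : bool := digits02 (ternary m).

Lemma only02_digit (a e : nat) :
  (e < 3)%N -> only02 (3 * a + e) = only02 a && (e \in [:: 0%N; 2%N]).
Proof.
move=> lt_e3; have [n0|n_gt0] := posnP (3 * a + e).
  by have [-> ->] : a = 0%N /\ e = 0%N by lia.
rewrite /only02 ternaryE //.
have -> : ((3 * a + e) %/ 3 = a)%N by lia.
have -> : ((3 * a + e) %% 3 = e)%N by lia.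
by rewrite /digits02 all_rcons andbC.
Qed.

Lemma only02_lead (k x : nat) : (x < 3 ^ k)%N ->
  only02 (3 ^ k + x) = false /\ only02 (2 * 3 ^ k + x) = only02 x.
Proof.
elim: k x => [|k IH] x lt_x.
  by have -> : x = 0%N by rewrite expn0 in lt_x; lia.
have [IH1 IH2] : only02 (3 ^ k + x %/ 3) = false /\
                 only02 (2 * 3 ^ k + x %/ 3) = only02 (x %/ 3).
  by apply: IH; rewrite expnS in lt_x; lia.
have lt_r : (x %% 3 < 3)%N by lia.
have Ex : x = (3 * (x %/ 3) + x %% 3)%N by lia.
have -> : (3 ^ k.+1 + x = 3 * (3 ^ k + x %/ 3) + x %% 3)%N by rewrite expnS; lia.
have -> : (2 * 3 ^ k.+1 + x = 3 * (2 * 3 ^ k + x %/ 3) + x %% 3)%N.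
  by rewrite expnS; lia.
split; first by rewrite only02_digit // IH1.
by rewrite only02_digit // IH2 [in RHS]Ex only02_digit.
Qed.

Lemma only02_around_digit0 (a : nat) : (0 < a)%N ->
  only02 (3 * a).+1 = false /\ only02 (3 * a).-1 = only02 a.-1.
Proof.
move=> a_gt0; have -> : ((3 * a).-1 = 3 * a.-1 + 2)%N by lia.
by rewrite -addn1 !only02_digit // !andbF andbT.
Qed.

Lemma only02_around_digit1 (a : nat) :
  only02 (3 * a + 1).+1 = only02 a /\ only02 (3 * a + 1).-1 = only02 a.
Proof.
have -> : ((3 * a + 1).+1 = 3 * a + 2)%N by lia.
have -> : ((3 * a + 1).-1 = 3 * a + 0)%N by lia.
by rewrite !only02_digit // !andbT.
Qed.

Lemma only02_around_digit2 (a : nat) :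
  only02 (3 * a + 2).+1 = only02 a.+1 /\ only02 (3 * a + 2).-1 = false.
Proof.
have -> : ((3 * a + 2).+1 = 3 * a.+1 + 0)%N by lia.
have -> : ((3 * a + 2).-1 = 3 * a + 1)%N by lia.
by rewrite !only02_digit // andbT andbF.
Qed.

Lemma ternary_last_digit (l : nat) : (0 < l)%N ->
  exists a e, [/\ (e < 3)%N, l = (3 * a + e)%N & ternary l = rcons (ternary a) e].
Proof.
by move=> l_gt0; exists (l %/ 3)%N, (l %% 3)%N; split; [lia | lia | exact: ternaryE].
Qed.

Lemma lang_minus1_rcons (t : seq nat) (e : nat) :
  lang_minus1 (rcons t e) <-> e = 1%N /\ digits02 t.
Proof.
split; last by case=> -> t02; exists t; rewrite cats1.
case=> w [w02]; rewrite cats1 => /eqP; rewrite eqseq_rcons.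
by case/andP=> /eqP -> /eqP ->.
Qed.

Lemma lang_minus1_nil : ~ lang_minus1 [::].
Proof. by case=> w [_] /(congr1 size); rewrite size_cat addn1. Qed.

Definition lang_run (x : nat) (s : seq nat) : Prop :=
  exists w k, digits02 w /\ s = w ++ 1%N :: x :: nseq k x.

Lemma lang_plus1_run (s : seq nat) :
  lang_plus1 s <-> lang_run 0 s \/ lang_run 2 s.
Proof.
split; first by case=> w [k [w02 [E|E]]]; [left|right]; exists w, k.
by case=> -[w [k [w02 E]]]; exists w, k; split => //; [left|right].
Qed.

Lemma lang_run_nil (x : nat) : ~ lang_run x [::].
Proof. by case=> w [k [_]] /(congr1 size); rewrite size_cat /= addnS. Qed.

Lemma lang_run_rcons (x : nat) (t : seq nat) (e : nat) :
  lang_run x (rcons t e) <-> e = x /\ (lang_minus1 t \/ lang_run x t).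
Proof.
have runS w k : w ++ 1%N :: x :: nseq k.+1 x = rcons (w ++ 1%N :: x :: nseq k x) x.
  by rewrite rcons_cat /=; congr (w ++ [:: 1%N, x & _]); elim: k => //= k ->.
have run0 w : w ++ [:: 1%N; x] = rcons (w ++ [:: 1%N]) x by rewrite -cats1 -catA.
split.
  case=> w [[|k] [w02]]; rewrite ?run0 ?runS => /eqP; rewrite eqseq_rcons;
    case/andP=> /eqP -> /eqP ->; split=> //.
    by left; exists w.
  by right; exists w, k.
case=> -> [[w [w02 ->]]|[w [k [w02 ->]]]]; first by exists w, 0%N; rewrite run0.
by exists w, k.+1; rewrite runS.
Qed.

Lemma lang_minus1_only02 (l : nat) : (0 < l)%N ->
  lang_minus1 (ternary l) <-> only02 l.+1 && only02 l.-1.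
Proof.
move=> l_gt0; have [a [e [lt_e3 El ->]]] := ternary_last_digit l_gt0; subst l.
rewrite lang_minus1_rcons; case: e lt_e3 l_gt0 => [|[|[|e]]] // _ l_gt0.
all: rewrite ?addn0.
- have a_gt0 : (0 < a)%N by lia.
  have [-> _] := only02_around_digit0 a_gt0.
  by split=> // -[].
- have [-> ->] := only02_around_digit1 a.
  by rewrite andbb; split=> [[]|].
- have [_ ->] := only02_around_digit2 a.
  by rewrite andbF; split=> // -[].
Qed.

Lemma lang_run0_only02 (l : nat) : (0 < l)%N ->
  lang_run 0 (ternary l) <-> only02 l.-1 && ~~ only02 l.+1.
Proof.
elim/ltn_ind: l => l IH l_gt0.
have [a [e [lt_e3 El ->]]] := ternary_last_digit l_gt0; subst l.
rewrite lang_run_rcons; case: e lt_e3 IH l_gt0 => [|[|[|e]]] // _ IH l_gt0.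
all: rewrite ?addn0.
- have a_gt0 : (0 < a)%N by lia.
  have [-> ->] := only02_around_digit0 a_gt0.
  by rewrite andbT lang_minus1_only02 // IH //; lia.
- have [-> ->] := only02_around_digit1 a.
  by rewrite andbN; split=> // -[].
- have [_ ->] := only02_around_digit2 a.
  by split=> // -[].
Qed.

Lemma lang_run2_only02 (l : nat) : (0 < l)%N ->
  lang_run 2 (ternary l) <-> only02 l.+1 && ~~ only02 l.-1.
Proof.
elim/ltn_ind: l => l IH l_gt0.
have [a [e [lt_e3 El ->]]] := ternary_last_digit l_gt0; subst l.
rewrite lang_run_rcons; case: e lt_e3 IH l_gt0 => [|[|[|e]]] // _ IH l_gt0.
all: rewrite ?addn0.
- have a_gt0 : (0 < a)%N by lia.
  have [-> _] := only02_around_digit0 a_gt0.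
  by split=> // -[].
- have [-> ->] := only02_around_digit1 a.
  by rewrite andbN; split=> // -[].
- have [-> ->] := only02_around_digit2 a; rewrite andbT.
  have [a0|a_gt0] := posnP a.
    by subst a; split=> // -[_ [/lang_minus1_nil|/lang_run_nil]].
  by rewrite lang_minus1_only02 // IH //; lia.
Qed.

Lemma lang_plus1_only02 (l : nat) : (0 < l)%N ->
  lang_plus1 (ternary l) <-> only02 l.+1 (+) only02 l.-1.
Proof.
move=> l_gt0; rewrite lang_plus1_run lang_run0_only02 // lang_run2_only02 //.
by case: (only02 l.+1); case: (only02 l.-1); split=> //; tauto.
Qed.

Local Open Scope ring_scope.

Lemma intr_Fp_mod (p : nat) (x : int) : prime p ->
  (x%:~R : 'F_p) = ((x %% p)%Z)%:~R.
Proof.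
move=> p_pr; rewrite {1}(divz_eq x p) rmorphD rmorphM /=.
by rewrite (_ : (p%:Z)%:~R = p%:R) // pchar_Fp_0 // mulr0 add0r.
Qed.

Lemma intr_Fp_eq (p : nat) (x y : int) : prime p ->
  (x%:~R : 'F_p) = y%:~R <-> (x = y %[mod p])%Z.
Proof.
move=> p_pr; have p_gt0 : (0 < p)%N by apply: prime_gt0.
have residue z : exists2 r : nat, (z %% p)%Z = r%:Z & (r < p)%N.
  exists `|(z %% p)%Z|%N; first by rewrite gez0_abs ?modz_ge0 // -lt0n.
  by rewrite -ltz_nat gez0_abs ?modz_ge0 ?ltz_pmod // -?lt0n // ltz_nat.
rewrite (intr_Fp_mod _ p_pr) [RHS](intr_Fp_mod _ p_pr).
have [r -> lt_r] := residue x; have [s -> lt_s] := residue y.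
rewrite -!pmulrn; split=> [/(congr1 val) /=|[->] //].
by rewrite !val_Fp_nat // !modn_small // => ->.
Qed.

Lemma bool_sum_F3 (a b : bool) :
  [/\ (a%:R + b%:R == -1 :> 'F_3) = a && b,
      (a%:R + b%:R == 1 :> 'F_3) = a (+) b
    & (a%:R + b%:R == 0 :> 'F_3) = ~~ a && ~~ b].
Proof. by case: a; case: b. Qed.

Lemma pchar_poly_F3 : 3 \in [pchar {poly 'F_3}].
Proof. by rewrite (pchar_poly _ 3) pchar_Fp. Qed.

Definition digit02_poly (k : nat) : {poly 'F_3} :=
  \prod_(j < k) (1 + 'X^(2 * 3 ^ j)).

(* By Frobenius, the product is a truncated (1 + z^2)^(-1/2). *)
Lemma digit02_poly_sq (k : nat) :
  digit02_poly k ^+ 2 * (1 + 'X^2) = 1 + 'X^(2 * 3 ^ k).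
Proof.
elim: k => [|k IH]; first by rewrite /digit02_poly big_ord0 expr1n mul1r.
rewrite /digit02_poly big_ord_recr /= exprMn mulrAC -/(digit02_poly k) IH.
rewrite -exprS exprDn_pchar ?pnatE ?pchar_poly_F3 // expr1n -exprM.
by rewrite expnSr mulnA.
Qed.

Lemma coef_digit02_poly (k m : nat) :
  (digit02_poly k)`_m = if (m < 3 ^ k)%N then (only02 m)%:R else 0.
Proof.
elim: k m => [|k IH] m.
  by rewrite /digit02_poly big_ord0 coef1 expn0; case: m.
rewrite /digit02_poly big_ord_recr /= -/(digit02_poly k).
rewrite mulrDr mulr1 coefD coefMXn !IH expnS.
have [lt_mP|le_Pm] := ltnP m (3 ^ k).
  have -> : (m < 2 * 3 ^ k)%N by lia.
  have -> : (m < 3 * 3 ^ k)%N by lia.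
  by rewrite addr0.
have [lt_m2P|le_2Pm] := ltnP m (2 * 3 ^ k).
  have lt_r : (m - 3 ^ k < 3 ^ k)%N by lia.
  have [lead1 _] := only02_lead lt_r.
  have -> : (m < 3 * 3 ^ k)%N by lia.
  by rewrite -[in RHS](@subnKC (3 ^ k) m) // lead1 addr0.
have -> : (m - 2 * 3 ^ k < 3 ^ k)%N = (m < 3 * 3 ^ k)%N by lia.
have [lt_m3P|_] := ltnP m (3 * 3 ^ k); last by rewrite addr0.
have lt_r : (m - 2 * 3 ^ k < 3 ^ k)%N by lia.
have [_ lead2] := only02_lead lt_r.
by rewrite add0r -lead2 subnKC.
Qed.

(* Fix a truncation order k; everything below is exact modulo z^(2 3^k). *)
Section TruncatedSeries.
Variable k : nat.

(* Q, a truncated square root of 1 + z^2. *)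
Definition sqrt_trunc : {poly 'F_3} := (1 + 'X^2) * digit02_poly k.

(* F, recovered from Q = z F + 1 - z. *)
Definition series_trunc : {poly 'F_3} := drop_poly 1 (sqrt_trunc - 1 + 'X).

Lemma sqrt_trunc_sq : sqrt_trunc ^+ 2 = (1 + 'X^2) * (1 + 'X^(2 * 3 ^ k)).
Proof. by rewrite -digit02_poly_sq /sqrt_trunc; ring. Qed.

Lemma coef_sqrt_trunc (m : nat) : sqrt_trunc`_m =
  (digit02_poly k)`_m + (if (m < 2)%N then 0 else (digit02_poly k)`_(m - 2)).
Proof. by rewrite /sqrt_trunc mulrDl mul1r coefD mulrC coefMXn ltnNge. Qed.

(* Q has constant term 1, so z F = Q - 1 + z indeed holds. *)
Lemma series_truncX : series_trunc * 'X = sqrt_trunc - 1 + 'X.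
Proof.
apply/polyP=> -[|i]; last by rewrite coefMX coef_drop_poly addn1.
rewrite coefMX coefD coefB coef_sqrt_trunc coef_digit02_poly expn_gt0 /=.
by rewrite coef1 coefX /= !addr0 subrr.
Qed.

(* F solves z F^2 - (1 - z) F + 1 = 0 up to the error (1 + z^2) z^(2 3^k - 1),
   since z times the left side is Q^2 - (1 + z^2) modulo 3. *)
Lemma series_trunc_eqn : 'X * (series_trunc ^+ 2 * 'X - (1 - 'X) * series_trunc + 1)
  = (1 + 'X^2) * 'X^(2 * 3 ^ k).
Proof.
have three0 : (3%:R : {poly 'F_3}) = 0 := pcharf0 pchar_poly_F3.
have -> : 'X * (series_trunc ^+ 2 * 'X - (1 - 'X) * series_trunc + 1) =
    sqrt_trunc ^+ 2 - (1 + 'X^2)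
    + 3%:R * (1 - 'X + 'X^2 - sqrt_trunc + sqrt_trunc * 'X).
  have -> : sqrt_trunc = series_trunc * 'X + 1 - 'X.
    by rewrite series_truncX; ring.
  ring.
by rewrite three0 mul0r addr0 sqrt_trunc_sq; ring.
Qed.

Lemma coef_series_trunc_rec (n : nat) : (n.+2 < 2 * 3 ^ k)%N ->
  series_trunc`_n.+1 = (series_trunc * series_trunc)`_n + series_trunc`_n.
Proof.
move=> lt_n; have := congr1 (fun p : {poly 'F_3} => p`_n.+2) series_trunc_eqn.
rewrite /= coefXM coefMXn lt_n /= coefD coefB coefC /= addr0.
rewrite coefMX mulrBl mul1r coefB coefXM /= expr2.
by move/eqP; rewrite subr_eq0 => /eqP ->; rewrite subrK.
Qed.

Lemma coef_series_trunc0 : series_trunc`_0 = 1.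
Proof.
rewrite coef_drop_poly coefD coefB coef_sqrt_trunc coef_digit02_poly.
by rewrite coef1 coefX /= if_same addr0 subr0 add0r.
Qed.

Lemma coef_series_trunc (l : nat) : (0 < l)%N -> (l.+1 < 3 ^ k)%N ->
  series_trunc`_l = (only02 l.+1)%:R + (only02 l.-1)%:R.
Proof.
move=> l_gt0 lt_l.
rewrite coef_drop_poly addn1 coefD coefB coef_sqrt_trunc !coef_digit02_poly coef1 coefX.
have -> : (l.+1 - 2 = l.-1)%N by lia.
have -> : (l.+1 < 2)%N = false by lia.
have -> : (l.-1 < 3 ^ k)%N by lia.
have -> : (l.+1 == 1)%N = false by lia.
by rewrite /= lt_l subr0 addr0.
Qed.
End TruncatedSeries.

(* The recurrence defining f reduces modulo 3 to that of the truncated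
   series, so f agrees with it below the truncation order. *)
Lemma free_subgroup_series_trunc (f : nat -> int) (k n : nat) :
  free_subgroup_series f -> (n.+1 < 2 * 3 ^ k)%N ->
  (f n)%:~R = (series_trunc k)`_n.
Proof.
case=> f0 [_ f_rec]; elim/ltn_ind: n => -[|n] IH lt_n.
  by rewrite f0 coef_series_trunc0.
have f_step : f n.+1 = \sum_(i < n.+1) f i * f (n - i)%N + 4 * f n + 6 * (n%:R * f n).
  by apply/esym/eqP; rewrite -subr_eq0 -[X in _ == X](f_rec n); apply/eqP; ring.
have [four six] : ((4 : int)%:~R = 1 :> 'F_3) /\ ((6 : int)%:~R = 0 :> 'F_3).
  by split; apply/eqP.
rewrite coef_series_trunc_rec // f_step !rmorphD rmorph_sum !rmorphM /= four six.
rewrite mul0r addr0 mul1r coefM (IH n) //; last by lia.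
congr (_ + _); apply: eq_bigr => -[i lt_i] _ /=.
by rewrite rmorphM /= !IH //; lia.
Qed.

Lemma free_subgroup_count_mod3 (f : nat -> int) (lam : nat) :
  free_subgroup_series f -> (0 < lam)%N ->
  (f lam)%:~R = (only02 lam.+1)%:R + (only02 lam.-1)%:R :> 'F_3.
Proof.
move=> hf lam_gt0; have lt_lam : (lam.+1 < 3 ^ lam.+1)%N by apply: ltn_expl.
rewrite (@free_subgroup_series_trunc f lam.+1) ?coef_series_trunc //.
by apply: leq_trans lt_lam _; rewrite leq_pmull.
Qed.

Theorem corollary17p5 (f : nat -> int) (hf : free_subgroup_series f)
  (lam : nat) (hlam : (1 <= lam)%N) :
  ((f lam = -1 %[mod 3])%Z <-> lang_minus1 (ternary lam)) /\
  ((f lam = 1 %[mod 3])%Z <-> lang_plus1 (ternary lam)) /\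
  (~ lang_minus1 (ternary lam) -> ~ lang_plus1 (ternary lam) ->
     (f lam = 0 %[mod 3])%Z).
Proof.
have p3 : prime 3 by [].
rewrite -!(intr_Fp_eq _ _ p3) (free_subgroup_count_mod3 hf hlam).
rewrite (lang_minus1_only02 hlam) (lang_plus1_only02 hlam).
have [minus1 plus1 zero] := bool_sum_F3 (only02 lam.+1) (only02 lam.-1).
rewrite rmorphN1 rmorph1 rmorph0; split; [|split].
- by rewrite -minus1; apply: rwP eqP.
- by rewrite -plus1; apply: rwP eqP.
move=> /negP not_minus1 /negP not_plus1; apply/eqP; rewrite zero.
by move: not_minus1 not_plus1; case: (only02 _); case: (only02 _).
Qed.
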